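(* Let $m$ be odd and $0\le r\le (m-1)/2$. Let $\mathcal{G}=\mathcal{G}(m,r)$ be the set of column vectors $\varphi_{P,b}$, indexed by $x\in\mathbb{F}_2^m$, given by $$\varphi_{P,b}(x)=i^{\,wt(d_P)+2wt(b)}\,i^{\,xPx^\top+2bx^\top},$$ where $b$ ranges over $\mathbb{F}_2^m$ and the binary symmetric matrix $P$ ranges over the Delsarte–Goethals set $DG(m,r)$. Then $\mathcal{G}$ is a group of order $2^{(r+2)m}$ under pointwise multiplication.
   Context: Here $i=\sqrt{-1}$. $DG(m,r)$ is the Delsarte–Goethals set: a binary vector space (over $\mathbb{F}_2$) of $2^{(r+1)m}$ binary symmetric $m\times m$ matrices such that the sum (difference) of any two distinct matrices in it has rank at least $m-2r$ over $\mathbb{F}_2$. For a binary matrix $P$, $d_P$ denotes its main diagonal (a binary vector), and $wt$ denotes Hamming weight (number of 1s). The exponents $xPx^\top+2bx^\top$ and $wt(d_P)+2wt(b)$ are computed in the integers modulo 4, viewing the binary entries as the integers 0 and 1. *)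

From HB Require Import structures.
From mathcomp Require Import all_boot all_order all_algebra algC.
Set Implicit Arguments. Unset Strict Implicit. Unset Printing Implicit Defensive.
Import Order.TTheory GRing.Theory Num.Theory.
Local Open Scope ring_scope.

Definition bit (a : 'F_2) : nat := nat_of_ord a.

Definition wt m (v : 'rV['F_2]_m) : nat := (\sum_(j < m) bit (v ord0 j))%N.

Definition diagv m (P : 'M['F_2]_m) : 'rV['F_2]_m := \row_j P j j.

(* x P x^T computed over the integers (exponent of i, so taken mod 4). *)
Definition quadf m (P : 'M['F_2]_m) (x : 'rV['F_2]_m) : nat :=
  (\sum_(j < m) \sum_(k < m) bit (x ord0 j) * bit (P j k) * bit (x ord0 k))%N.

Definition linf m (b x : 'rV['F_2]_m) : nat :=
  (\sum_(j < m) bit (b ord0 j) * bit (x ord0 j))%N.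

Definition phi m (P : 'M['F_2]_m) (b : 'rV['F_2]_m) :
    {ffun 'rV['F_2]_m -> algC} :=
  [ffun x => 'i ^+ (wt (diagv P) + 2 * wt b)%N * 'i ^+ (quadf P x + 2 * linf b x)%N].

Definition is_DG (m r : nat) (DG : {set 'M['F_2]_m}) : Prop :=
  [/\ 0 \in DG,
      {in DG &, forall P Q, P + Q \in DG},
      {in DG, forall P, P^T = P},
      #|DG| = (2 ^ ((r + 1) * m))%N &
      {in DG &, forall P Q : 'M['F_2]_m, P != Q -> (m - 2 * r <= \rank (P - Q)%R)%N}].

Definition Gset m (DG : {set 'M['F_2]_m}) : seq {ffun 'rV['F_2]_m -> algC} :=
  undup [seq phi P b | P <- enum DG, b <- enum 'rV['F_2]_m].

Definition pmul m (f g : {ffun 'rV['F_2]_m -> algC}) : {ffun 'rV['F_2]_m -> algC} :=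
  [ffun x => f x * g x].
Definition pone m : {ffun 'rV['F_2]_m -> algC} := [ffun _ => 1].
Definition pinv m (f : {ffun 'rV['F_2]_m -> algC}) : {ffun 'rV['F_2]_m -> algC} :=
  [ffun x => (f x)^-1].

From HB Require Import structures.
From mathcomp Require Import all_boot all_order all_algebra algC.
From mathcomp Require Import ring.
Set Implicit Arguments. Unset Strict Implicit. Unset Printing Implicit Defensive.
Import Order.TTheory GRing.Theory Num.Theory.
Local Open Scope ring_scope.

(* Write phi_{P,b}(x) = i^c(P,b) * i^q_{P,b}(x) with both exponents in Z/4, bits being
   lifted to {0,1}.  The lift is additive up to a carry, a + b |-> a + b + 2ab, so for
   symmetric P and Q the forms x(P+Q)x^T and xPx^T + xQx^T differ by
   2 sum_{j,k} x_j P_jk Q_jk x_k; modulo 4 the off-diagonal terms of this sum cancel in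
   pairs, leaving 2 (d_P * d_Q) x^T.  Hence phi_{P,b} phi_{Q,c} = phi_{P+Q, b+c+d_P*d_Q},
   so G is closed under products because DG is additive, and since every element has
   order dividing 4, inverses are cubes.  Evaluating x P x^T + 2 b x^T at indicator vectors
   of one- and two-element sets recovers d_P, b and then all of P, so (P, b) |-> phi_{P,b}
   is injective and |G| = |DG| 2^m. *)

Lemma prim4_Ci : 4.-primitive_root ('i : algC).
Proof.
have m1_neq1 : (-1 : algC) != 1 by rewrite -subr_eq0 -opprD oppr_eq0 (pnatr_eq0 _ 2).
have i_neq1 : ('i : algC) != 1.
  by apply: contraNneq m1_neq1 => i1; rewrite -sqrCi i1 expr1n.
have i4 : ('i : algC) ^+ 4 = 1 by rewrite (exprM _ 2 2) sqrCi sqrrN expr1n.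
apply/andP; split=> //; apply/forallP=> -[[|[|[|[|//]]]] ?]; rewrite unity_rootE /=.
- by rewrite expr1 (negbTE i_neq1).
- by rewrite sqrCi (negbTE m1_neq1).
- apply/eqP/negbTE; apply: contraNneq i_neq1 => i3.
  by rewrite -[X in _ == X]i4 exprS i3 mulr1.
- by rewrite i4 !eqxx.
Qed.

Definition powCi (a : 'Z_4) : algC := 'i ^+ a.

Lemma powCi_nat n : powCi n%:R = 'i ^+ n.
Proof. by rewrite /powCi val_Zp_nat // (prim_expr_mod prim4_Ci). Qed.

Lemma powCiD a b : powCi (a + b) = powCi a * powCi b.
Proof. by rewrite -[a]natr_Zp -[b]natr_Zp -natrD !powCi_nat exprD. Qed.

Lemma powCi_inj : injective powCi.
Proof.
move=> a b /eqP; rewrite (eq_prim_root_expr prim4_Ci) !modn_small //.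
by move/eqP/val_inj.
Qed.

Lemma powCi_neq0 a : powCi a != 0.
Proof. exact/expf_neq0/neq0Ci. Qed.

Lemma powCi_expr4 a : powCi a ^+ 4 = 1.
Proof. by rewrite /powCi -exprM mulnC exprM (prim_expr_order prim4_Ci) expr1n. Qed.

Lemma powCiV a : (powCi a)^-1 = powCi a * (powCi a * powCi a).
Proof.
apply: (mulfI (powCi_neq0 a)); rewrite mulfV ?powCi_neq0 //.
by rewrite -(powCi_expr4 a) !exprS expr0 mulr1.
Qed.

Lemma Z4_char : 4 = 0 :> 'Z_4.
Proof. by apply/eqP. Qed.

Definition z4 (a : 'F_2) : 'Z_4 := (bit a)%:R.

Lemma z4D a b : z4 (a + b) = z4 a + z4 b + 2 * z4 a * z4 b.
Proof. by case: a => -[|[|//]] ?; case: b => -[|[|//]] ?; apply/eqP. Qed.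

Lemma z4M a b : z4 (a * b) = z4 a * z4 b.
Proof. by case: a => -[|[|//]] ?; case: b => -[|[|//]] ?; apply/eqP. Qed.

Lemma z4_idem a : z4 a * z4 a = z4 a.
Proof. by case: a => -[|[|//]] ?; apply/eqP. Qed.

Lemma z4_pair_inj a b a' b' : z4 a + 2 * z4 b = z4 a' + 2 * z4 b' -> a = a' /\ b = b'.
Proof.
by case: a => -[|[|//]] ?; case: b => -[|[|//]] ?; case: a' => -[|[|//]] ?;
  case: b' => -[|[|//]] ? /eqP // _; split; apply: val_inj.
Qed.

Lemma mul2z4_inj : injective (fun a => 2 * z4 a).
Proof. by move=> a b e; apply: (proj2 (@z4_pair_inj 0 a 0 b _)); rewrite !add0r. Qed.

Lemma mul2z4D a b : 2 * z4 (a + b) = 2 * z4 a + 2 * z4 b.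
Proof. by rewrite z4D; ring: Z4_char. Qed.

Lemma sum_symmetric (R : nmodType) m (s : 'I_m -> 'I_m -> R) :
  (forall j k : 'I_m, s j k = s k j) ->
  \sum_(j < m) \sum_(k < m) s j k =
    \sum_(j < m) s j j + (\sum_(j < m) \sum_(k < m | (j < k)%N) s j k) *+ 2.
Proof.
move=> s_sym.
have split_row (j : 'I_m) : \sum_(k < m) s j k =
    s j j + \sum_(k < m | (j < k)%N) s j k + \sum_(k < m | (k < j)%N) s j k.
  rewrite (bigD1 j) //= (bigID (fun k : 'I_m => (j < k)%N)) /= addrA.
  congr (_ + _ + _); apply: eq_bigl => k; rewrite -val_eqE /=.
    by rewrite andb_idl // => /gtn_eqF ->.
  by rewrite -leqNgt -ltn_neqAle.
have swap : \sum_(j < m) \sum_(k < m | (k < j)%N) s j k =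
             \sum_(j < m) \sum_(k < m | (j < k)%N) s j k.
  rewrite (exchange_big_dep xpredT) //=.
  by apply: eq_bigr => j _; apply: eq_bigr => k _; apply: s_sym.
by rewrite (eq_bigr _ (fun j _ => split_row j)) !big_split /= swap -addrA mulr2n.
Qed.

Lemma mul2_sum_symmetric m (s : 'I_m -> 'I_m -> 'Z_4) :
  (forall j k : 'I_m, s j k = s k j) ->
  2 * \sum_(j < m) \sum_(k < m) s j k = 2 * \sum_(j < m) s j j.
Proof. by move/sum_symmetric->; ring: Z4_char. Qed.

Lemma bit_nat_bool (c : bool) : bit c%:R = c.
Proof. by case: c. Qed.

Lemma symmetric_mxE (T : Type) n (M : 'M[T]_n) :
  M^T = M -> forall j k, M k j = M j k.
Proof. by move=> sM j k; rewrite -{1}sM mxE. Qed.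

Section Phases.
Variable m : nat.

Definition diagv_mul (P Q : 'M['F_2]_m) : 'rV['F_2]_m := \row_j (P j j * Q j j).

Lemma wt_Z4 (v : 'rV['F_2]_m) : (wt v)%:R = \sum_j z4 (v ord0 j).
Proof. by rewrite /wt natr_sum. Qed.

Lemma linf_Z4 (b x : 'rV['F_2]_m) :
  (linf b x)%:R = \sum_j z4 (b ord0 j) * z4 (x ord0 j).
Proof. by rewrite /linf natr_sum; apply: eq_bigr => j _; rewrite natrM. Qed.

Lemma quadf_Z4 (P : 'M['F_2]_m) x :
  (quadf P x)%:R = \sum_j \sum_k z4 (x ord0 j) * z4 (P j k) * z4 (x ord0 k).
Proof.
rewrite /quadf natr_sum; apply: eq_bigr => j _; rewrite natr_sum.
by apply: eq_bigr => k _; rewrite !natrM.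
Qed.

Lemma wt_diagvD (P Q : 'M['F_2]_m) :
  (wt (diagv (P + Q)))%:R =
  (wt (diagv P))%:R + (wt (diagv Q))%:R + 2 * (wt (diagv_mul P Q))%:R :> 'Z_4.
Proof.
rewrite !wt_Z4 mulr_sumr -!big_split; apply: eq_bigr => j _ /=.
by rewrite !mxE z4D z4M mulrA.
Qed.

Lemma mul2_wtD (u v : 'rV['F_2]_m) :
  2 * (wt (u + v))%:R = 2 * (wt u)%:R + 2 * (wt v)%:R :> 'Z_4.
Proof.
rewrite !wt_Z4 !mulr_sumr -big_split; apply: eq_bigr => j _ /=.
by rewrite mxE mul2z4D.
Qed.

Lemma mul2_linfD (u v x : 'rV['F_2]_m) :
  2 * (linf (u + v) x)%:R = 2 * (linf u x)%:R + 2 * (linf v x)%:R :> 'Z_4.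
Proof.
rewrite !linf_Z4 !mulr_sumr -big_split; apply: eq_bigr => j _ /=.
by rewrite mxE !mulrA mul2z4D mulrDl.
Qed.

Lemma quadfD (P Q : 'M['F_2]_m) x : P^T = P -> Q^T = Q ->
  (quadf (P + Q) x)%:R =
  (quadf P x)%:R + (quadf Q x)%:R + 2 * (linf (diagv_mul P Q) x)%:R :> 'Z_4.
Proof.
move=> sP sQ; rewrite linf_Z4 !quadf_Z4.
transitivity (\sum_j \sum_k z4 (x ord0 j) * z4 (P j k) * z4 (x ord0 k) +
  \sum_j \sum_k z4 (x ord0 j) * z4 (Q j k) * z4 (x ord0 k) +
  2 * \sum_j \sum_k z4 (x ord0 j) * (z4 (P j k) * z4 (Q j k)) * z4 (x ord0 k)).
  rewrite mulr_sumr -!big_split; apply: eq_bigr => j _ /=.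
  rewrite mulr_sumr -!big_split; apply: eq_bigr => k _ /=.
  by rewrite mxE z4D; ring.
rewrite mul2_sum_symmetric => [|j k]; last by rewrite (symmetric_mxE sP) (symmetric_mxE sQ); ring.
congr (_ + 2 * _); apply: eq_bigr => j _.
by rewrite mxE z4M -[in RHS](z4_idem (x _ _)); ring.
Qed.

Definition cphase (P : 'M['F_2]_m) (b : 'rV['F_2]_m) : 'Z_4 :=
  (wt (diagv P))%:R + 2 * (wt b)%:R.

Definition qphase (P : 'M['F_2]_m) (b x : 'rV['F_2]_m) : 'Z_4 :=
  (quadf P x)%:R + 2 * (linf b x)%:R.

Lemma phiE (P : 'M['F_2]_m) b x :
  phi P b x = powCi (cphase P b) * powCi (qphase P b x).
Proof.
rewrite ffunE -!powCi_nat !natrD /cphase /qphase.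
by congr (powCi _ * powCi _); ring.
Qed.

Lemma cphaseD (P Q : 'M['F_2]_m) b c :
  cphase P b + cphase Q c = cphase (P + Q) (b + c + diagv_mul P Q).
Proof. by rewrite /cphase wt_diagvD !mul2_wtD; ring: Z4_char. Qed.

Lemma qphaseD (P Q : 'M['F_2]_m) b c x : P^T = P -> Q^T = Q ->
  qphase P b x + qphase Q c x = qphase (P + Q) (b + c + diagv_mul P Q) x.
Proof. by move=> sP sQ; rewrite /qphase quadfD // !mul2_linfD; ring: Z4_char. Qed.

Lemma phi_mul (P Q : 'M['F_2]_m) b c : P^T = P -> Q^T = Q ->
  pmul (phi P b) (phi Q c) = phi (P + Q) (b + c + diagv_mul P Q).
Proof.
move=> sP sQ; apply/ffunP => x; rewrite ffunE !phiE -cphaseD -qphaseD //.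
by rewrite !powCiD; ring.
Qed.

Lemma phi00 : phi 0 0 = pone m.
Proof.
apply/ffunP => x; rewrite phiE ffunE /cphase /qphase /wt /quadf /linf.
rewrite !big1 ?mulr0 ?addr0 ?mulr1 // => j _; rewrite ?big1 ?mxE ?muln0 // => k _.
by rewrite mxE muln0 mul0n.
Qed.

Lemma phiV (P : 'M['F_2]_m) b :
  pinv (phi P b) = pmul (phi P b) (pmul (phi P b) (phi P b)).
Proof.
apply/ffunP => x; rewrite ffunE [in RHS]ffunE [X in _ * X]ffunE.
by rewrite phiE -powCiD powCiV.
Qed.

Definition row_indicator (S : {set 'I_m}) : 'rV['F_2]_m := \row_i (i \in S)%:R.

Lemma quadf_indicator (P : 'M['F_2]_m) S :
  quadf P (row_indicator S) = (\sum_(j in S) \sum_(k in S) bit (P j k))%N.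
Proof.
rewrite /quadf [RHS]big_mkcond; apply: eq_bigr => j _; rewrite mxE bit_nat_bool.
case: (j \in S) => /=; last by rewrite big1 // => k _; rewrite !mul0n.
rewrite [RHS]big_mkcond; apply: eq_bigr => k _; rewrite mxE bit_nat_bool mul1n.
by case: (k \in S); rewrite ?muln1 ?muln0.
Qed.

Lemma linf_indicator (b : 'rV['F_2]_m) S :
  linf b (row_indicator S) = (\sum_(j in S) bit (b ord0 j))%N.
Proof.
rewrite /linf [RHS]big_mkcond; apply: eq_bigr => j _; rewrite mxE bit_nat_bool.
by case: (j \in S); rewrite ?muln1 ?muln0.
Qed.

Lemma row_indicator0 : row_indicator (set0 : {set 'I_m}) = 0.
Proof. by apply/rowP => j; rewrite !mxE inE. Qed.

Lemma qphase0 (P : 'M['F_2]_m) b : qphase P b 0 = 0.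
Proof.
by rewrite -row_indicator0 /qphase quadf_indicator linf_indicator !big_set0 mulr0 addr0.
Qed.

Lemma qphase_set1 (P : 'M['F_2]_m) b j :
  qphase P b (row_indicator [set j]) = z4 (P j j) + 2 * z4 (b ord0 j).
Proof. by rewrite /qphase quadf_indicator linf_indicator !big_set1. Qed.

Lemma qphase_set2 (P : 'M['F_2]_m) b j k : P^T = P -> j != k ->
  qphase P b (row_indicator [set j; k]) =
  z4 (P j j) + z4 (P k k) + 2 * z4 (P j k) + 2 * (z4 (b ord0 j) + z4 (b ord0 k)).
Proof.
move=> sP njk; have sum2 (F : 'I_m -> nat) : (\sum_(i in [set j; k]) F i = F j + F k)%N.
  by rewrite big_setU1 ?inE // big_set1.
rewrite /qphase quadf_indicator linf_indicator !sum2 !natrD (symmetric_mxE sP j k) /z4.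
ring.
Qed.

Lemma phi_eq_qphase (P Q : 'M['F_2]_m) b c :
  phi P b = phi Q c -> forall x, qphase P b x = qphase Q c x.
Proof.
move=> e x; have e0 : phi P b 0 = phi Q c 0 by rewrite e.
have ex : phi P b x = phi Q c x by rewrite e.
move: e0 ex; rewrite !phiE !qphase0 => /(mulIf (powCi_neq0 0)) -> /(mulfI (powCi_neq0 _)).
exact: powCi_inj.
Qed.

Lemma phi_inj (P Q : 'M['F_2]_m) b c : P^T = P -> Q^T = Q ->
  phi P b = phi Q c -> P = Q /\ b = c.
Proof.
move=> sP sQ /phi_eq_qphase e.
have diag j : P j j = Q j j /\ b ord0 j = c ord0 j.
  by apply: z4_pair_inj; rewrite -!qphase_set1.
have bc : b = c by apply/rowP => j; case: (diag j).
split=> //; apply/matrixP => j k; have [<-|njk] := eqVneq j k; first by case: (diag j).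
apply: mul2z4_inj => /=; move: (e (row_indicator [set j; k])).
rewrite !qphase_set2 // bc; case: (diag j) => -> _; case: (diag k) => -> _.
by move/addIr/addrI.
Qed.

Lemma Gset_memP (DG : {set 'M['F_2]_m}) f :
  reflect (exists2 P, P \in DG & exists b, f = phi P b) (f \in Gset DG).
Proof.
rewrite /Gset mem_undup; apply: (iffP allpairsP) => [[[P b] /= [P_DG _ ->]]|].
  by exists P; [rewrite -mem_enum | exists b].
by case=> P P_DG [b ->]; exists (P, b); rewrite /= !mem_enum.
Qed.

Lemma phi_in_Gset (DG : {set 'M['F_2]_m}) P b : P \in DG -> phi P b \in Gset DG.
Proof. by move=> P_DG; apply/Gset_memP; exists P => //; exists b. Qed.

Lemma size_Gset (DG : {set 'M['F_2]_m}) :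
  {in DG, forall P, P^T = P} -> size (Gset DG) = (#|DG| * 2 ^ m)%N.
Proof.
move=> DG_sym; rewrite /Gset undup_id.
  by rewrite size_allpairs -!cardE card_mx card_Fp // mul1n.
apply: allpairs_uniq => [||[P b] [Q c]]; rewrite ?enum_uniq //=.
move=> /allpairsP[[P' b'] [/= P'DG _ [-> ->]]] /allpairsP[[Q' c'] [/= Q'DG _ [-> ->]]].
rewrite !mem_enum in P'DG Q'DG.
by case/phi_inj; rewrite ?DG_sym // => -> ->.
Qed.

End Phases.

Theorem propositionA1 (m r : nat) (DG : {set 'M['F_2]_m}) :
  odd m -> (r <= (m - 1) %/ 2)%N -> is_DG r DG ->
  [/\ pone m \in Gset DG,
      {in Gset DG &, forall f g : {ffun 'rV['F_2]_m -> algC}, pmul f g \in Gset DG},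
      {in Gset DG, forall f : {ffun 'rV['F_2]_m -> algC}, (forall x, f x != 0) /\ pinv f \in Gset DG} &
      size (Gset DG) = (2 ^ ((r + 2) * m))%N].
Proof.
move=> _ _ [DG0 DG_add DG_sym DG_card _].
have Gset_mul : {in Gset DG &, forall f g, pmul f g \in Gset DG}.
  move=> _ _ /Gset_memP[P P_DG [b ->]] /Gset_memP[Q Q_DG [c ->]].
  by rewrite phi_mul ?DG_sym //; apply/phi_in_Gset/DG_add.
split=> //.
- by rewrite -phi00; apply: phi_in_Gset.
- move=> _ /Gset_memP[P P_DG [b ->]]; split.
    by move=> x; rewrite phiE mulf_neq0 ?powCi_neq0.
  by rewrite phiV; apply: (Gset_mul); [|apply: (Gset_mul)]; apply: phi_in_Gset.
- by rewrite size_Gset // DG_card -expnD -mulSnr addn1 addn2.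
Qed.
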